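(* Let $K \geq 2$ be an integer and let $\Delta_K = \{\mathbf{p} = (\hat{p}_1,\dots,\hat{p}_K) \in [0,1]^K : \sum_{k=1}^K \hat{p}_k = 1\}$ be the probability simplex. Fix $\mathbf{y} = (\hat{y}_1,\dots,\hat{y}_K) \in \Delta_K$. Let $j \in \{1,\dots,K\}$ be an index with $\hat{y}_j = \max_{1 \leq k \leq K} \hat{y}_k$, and let $\mathbf{t} = (\hat{t}_1,\dots,\hat{t}_K) \in \{0,1\}^K$ be the simplex vertex with $\hat{t}_j = 1$ and $\hat{t}_k = 0$ for $k \neq j$. Then $$\sum_{k=1}^K \log\left(\hat{t}_k + \hat{y}_k\right) \;\leq\; \sum_{k=1}^K \log\left(\hat{p}_k + \hat{y}_k\right) \qquad \text{for all } \mathbf{p} = (\hat{p}_1,\dots,\hat{p}_K) \in \Delta_K,$$ i.e. the function $\mathbf{p} \mapsto \sum_{k=1}^K \log(\hat{p}_k + \hat{y}_k)$ attains its minimum over $\Delta_K$ at $\mathbf{t}$.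
   Context: Here $\log$ is the natural logarithm, with the convention $\log 0 = -\infty$ (values in the extended reals). In the paper's setting, $\hat{y}_k$ is the ground-truth proportion of pixels in segmentation region $k$ and $\hat{p}_k$ is the predicted (soft) proportion of class $k$; the quantity $\sum_k \log(\hat{p}_k + \hat{y}_k)$ is the label-marginal term arising in the decomposition of the multi-class logarithmic Dice loss. *)

From mathcomp Require Import all_boot all_order all_algebra.
From mathcomp Require Import all_classical all_reals ereal exp.
Set Implicit Arguments. Unset Strict Implicit. Unset Printing Implicit Defensive.
Import Order.TTheory GRing.Theory Num.Theory.
Local Open Scope ring_scope.

(* Extended-real natural logarithm with log 0 = -oo (only applied to x >= 0). *)
Definition elog (R : realType) (x : R) : \bar R :=
  if x == 0 then -oo%E else (ln x)%:E.

Definition in_simplex (R : realType) (K : nat) (p : 'I_K -> R) : Prop :=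
  (forall k, 0 <= p k <= 1) /\ \sum_(k < K) p k = 1.

Definition vertex (R : realType) (K : nat) (j : 'I_K) : 'I_K -> R :=
  fun k => if k == j then 1 else 0.

(** Where every [y_k > 0], concavity of [ln] on [[y_k, 1 + y_k]] gives
    [ln (p_k + y_k) >= ln y_k + p_k * (ln (1 + y_k) - ln y_k)].  The increment
    [ln (1 + y) - ln y = ln (1 + 1/y)] is nonincreasing in [y], so it is smallest
    at the maximal coordinate [j]; as [p] sums to one, the right-hand side is then
    at least [\sum_k ln y_k + ln (1 + y_j) - ln y_j], which is the value at the
    vertex [e_j].  If some [y_k = 0] then [k <> j], and the vertex value is [-oo]. *)
From mathcomp Require Import ring lra.
From mathcomp Require Import all_boot all_order all_algebra.
From mathcomp Require Import all_classical all_reals ereal exp convex.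
Set Implicit Arguments. Unset Strict Implicit. Unset Printing Implicit Defensive.
Import Order.TTheory GRing.Theory Num.Theory.
Local Open Scope ring_scope.

Lemma ln_chord_le (R : realType) (y q : R) : 0 < y -> 0 <= q <= 1 ->
  ln y + q * (ln (1 + y) - ln y) <= ln (q + y).
Proof.
move=> y_gt0 /andP[q_ge0 q_le1].
have := @concave_ln R (Itv01 q_ge0 q_le1) (1 + y) y (addr_gt0 ltr01 y_gt0) y_gt0.
rewrite !convRE /= /unstable.onem.
have -> : q * (1 + y) + (1 - q) * y = q + y by ring.
by apply: le_trans; lra.
Qed.

Lemma ln1pD_ln_nonincr (R : realType) (y z : R) : 0 < y -> y <= z ->
  ln (1 + z) - ln z <= ln (1 + y) - ln y.
Proof.
move=> y_gt0 le_yz; have z_gt0 : 0 < z by apply: lt_le_trans le_yz.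
rewrite lerBrDr addrAC lerBlDr -!lnM ?posrE ?addr_gt0 //.
by rewrite ler_ln ?posrE ?mulr_gt0 ?addr_gt0 //; nra.
Qed.

Lemma elogE (R : realType) (x : R) : 0 < x -> elog x = (ln x)%:E.
Proof. by move=> x_gt0; rewrite /elog gt_eqF. Qed.

Lemma sum_vertexM (R : realType) (K : nat) (j : 'I_K) (f : 'I_K -> R) :
  \sum_(k < K) vertex R j k * f k = f j.
Proof.
rewrite (bigD1 j) //= big1 ?addr0 /vertex ?eqxx ?mul1r // => k /negbTE ->.
by rewrite mul0r.
Qed.

Lemma simplex_max_gt0 (R : realType) (K : nat) (y : 'I_K -> R) (j : 'I_K) :
  in_simplex y -> (forall k, y k <= y j) -> 0 < y j.
Proof.
move=> [_ sum_y1] y_le_yj; rewrite ltNge; apply/negP => yj_le0.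
have : \sum_(k < K) y k <= \sum_(k < K) (0 : R).
  by apply: ler_sum => k _; apply: le_trans (y_le_yj k) _.
by rewrite sum_y1 big1_eq ler10.
Qed.

Lemma sum_ln_vertex_le (R : realType) (K : nat) (y p : 'I_K -> R) (j : 'I_K) :
  (forall k, 0 < y k) -> (forall k, y k <= y j) -> in_simplex p ->
  \sum_(k < K) ln (vertex R j k + y k) <= \sum_(k < K) ln (p k + y k).
Proof.
move=> y_gt0 y_le_yj [p01 sum_p1].
set d := fun k => ln (1 + y k) - ln (y k).
have -> : \sum_(k < K) ln (vertex R j k + y k) = \sum_(k < K) ln (y k) + d j.
  rewrite -(sum_vertexM j d) -big_split; apply: eq_bigr => k _.
  rewrite /vertex /d; case: (k == j) => /=.
    by rewrite mul1r addrC subrK.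
  by rewrite mul0r add0r addr0.
apply: (@le_trans _ _ (\sum_(k < K) (ln (y k) + p k * d k))); last first.
  by apply: ler_sum => k _; exact: ln_chord_le (y_gt0 k) (p01 k).
rewrite big_split lerD2l /= -[d j]mul1r -sum_p1 mulr_suml.
apply: ler_sum => k _; have /andP[p_ge0 _] := p01 k.
exact: ler_wpM2l p_ge0 _ _ (ln1pD_ln_nonincr (y_gt0 k) (y_le_yj k)).
Qed.

Theorem proposition1 (R : realType) (K : nat) (hK : (2 <= K)%N)
  (y : 'I_K -> R) (hy : in_simplex y)
  (j : 'I_K) (hj : forall k, y k <= y j)
  (p : 'I_K -> R) (hp : in_simplex p) :
  (\sum_(k < K) elog (vertex R j k + y k) <= \sum_(k < K) elog (p k + y k))%E.
Proof.
have yj_gt0 := simplex_max_gt0 hy hj.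
case: (pselect (exists k, y k = 0)) => [[k yk0]|no_zero].
  have kNj : k != j by apply: contra_eq_neq yk0 => ->; rewrite gt_eqF.
  rewrite (bigD1 k) //= /vertex (negbTE kNj) yk0 addr0 /elog eqxx addNye.
  exact: leNye.
have y_gt0 k : 0 < y k.
  have /andP[+ _] := hy.1 k; rewrite le_eqVlt => /orP[/eqP y0|//].
  by case: no_zero; exists k.
have p_ge0 k : 0 <= p k by have /andP[] := hp.1 k.
rewrite (eq_bigr (fun k => (ln (vertex R j k + y k))%:E)); last first.
  by move=> k _; rewrite elogE // /vertex; case: (k == j); rewrite ?add0r ?addr_gt0.
rewrite [X in (_ <= X)%E](eq_bigr (fun k => (ln (p k + y k))%:E)); last first.
  by move=> k _; rewrite elogE // ltr_wpDl.
by rewrite !sumEFin lee_fin sum_ln_vertex_le.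
Qed.
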